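(* Let $n\in\mathbf{N}$, let $A\subset[n]$ have property P, let $k,a,q$ be positive integers and $0\leqslant\alpha\leqslant1$. Let $B$ be a finite set such that every element of $k\cdot B$ is a positive integer which is an integer multiple of some element of $A\cap[1,\alpha n]$, every element of $k\cdot B$ is congruent to $a$ modulo $q$, and $k\cdot B\subset I$ for some interval of integers $I$. Then $$|B|+\left|\left(A_{(\alpha,1]}+A_{(\alpha,1]}\right)\cap I\cap(a+q\mathbf{N})\right|<\frac{|I|}{q}+1.$$
   Context: A set $A\subset\mathbf{N}$ has property P if there are no $x,y,z\in A$ (not necessarily distinct $x,y$) with $z<x$, $z<y$ and $z\mid x+y$. For reals $0\le\alpha<\beta\le1$, $A_{(\alpha,\beta]}=A\cap(\alpha n,\beta n]$. $[\beta]=[1,\beta]\cap\mathbf{N}$; an interval means a set of consecutive integers. $k\cdot B=\{kb:b\in B\}$, $X+Y=\{x+y:x\in X,y\in Y\}$, $a+q\mathbf{N}=\{a+qm:m\in\mathbf{N}\}$. *)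

From HB Require Import structures.
From mathcomp Require Import all_boot all_order all_algebra.
From mathcomp Require Import finmap.
From mathcomp Require Import reals.
Set Implicit Arguments. Unset Strict Implicit. Unset Printing Implicit Defensive.
Import Order.TTheory GRing.Theory Num.Theory.
Local Open Scope fset_scope.

Definition propertyP (A : {fset nat}) : Prop :=
  forall x y z : nat, x \in A -> y \in A -> z \in A ->
    (z < x)%N -> (z < y)%N -> ~~ (z %| x + y)%N.

Definition Apart (R : realType) (A : {fset nat}) (alpha beta : R) (n : nat)
  : {fset nat} :=
  [fset x in A | (alpha * n%:R < x%:R)%R && (x%:R <= beta * n%:R)%R].

Definition sumset (X Y : {fset nat}) : {fset nat} :=
  [fset (x + y)%N | x in X, y in Y].

Definition inIntv (l : int) (len : nat) (s : int) : bool :=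
  (l <= s)%R && (s < l + len%:Z)%R.

(* membership in a + qN = {a + q m : m in N}, N = {0,1,2,...}:
   s = a + q m for some m >= 0, i.e. a <= s and q | s - a *)
Definition inAP (a q s : nat) : bool := (a <= s)%N && (q %| s - a)%N.

Definition sumsetIntvAP (X : {fset nat}) (l : int) (len : nat) (a q : nat)
  : {fset nat} :=
  [fset s in sumset X X | inIntv l len s%:Z && inAP a q s].

From HB Require Import structures.
From mathcomp Require Import all_boot all_order all_algebra.
From mathcomp Require Import finmap.
From mathcomp Require Import reals.
From mathcomp Require Import zify.
Import Order.TTheory GRing.Theory Num.Theory.
Local Open Scope fset_scope.

(* Map every b in B to the natural number c = k b.  Since k > 0
   this map is injective, and its values c are multiples of some z in A with
   z <= alpha n.  Every element of (A_(alpha,1] + A_(alpha,1]) is a sum x + y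
   of elements of A with z < x and z < y, so by property P it is not divisible
   by z; hence the values k b and the elements of the restricted sumset are
   pairwise distinct.  All of them are naturals lying in the interval I and
   congruent to a modulo q, and such an interval of length |I| contains at
   most ceil(|I|/q) = (|I| + q - 1) / q of them, which is < |I|/q + 1. *)

Lemma inIntv_natIntv (l : int) (len : nat) : exists m : nat,
  forall t : nat, inIntv l len t%:Z -> (m <= t < m + len)%N.
Proof.
case: l => [m|j]; [exists m|exists 0%N] => t; rewrite /inIntv => /andP[h1 h2]; lia.
Qed.

(* A residue class modulo q meets an interval of length [len] in at most
   ceil(len / q) = (len + q - 1) / q points: t |-> (t - m) / q is injective on
   it and takes values below that bound. *)
Lemma residue_class_count {s : seq nat} {m len q r : nat} : (0 < q)%N -> uniq s ->
  (forall t, t \in s -> (m <= t < m + len)%N /\ t %% q = r) ->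
  (size s <= (len + q - 1) %/ q)%N.
Proof.
move=> q0 us hs.
pose h t := ((t - m) %/ q)%N.
have h_inj : {in s &, injective h}.
  move=> t t' /hs [h1 h2] /hs [h3 h4] e.
  have same_mod : (t - m = t' - m %[mod q])%N.
    apply/eqP; rewrite -(eqn_modDl m) !subnKC; [|lia|lia].
    by rewrite h2 h4.
  have := divn_eq (t - m) q; rewrite same_mod -/(h t) e -/(h t') -divn_eq; lia.
rewrite -(size_map h) -(size_iota 0 ((len + q - 1) %/ q)).
apply: uniq_leq_size; first by rewrite map_inj_in_uniq.
move=> u /mapP [t /hs [h1 _] ->]; rewrite mem_iota /= add0n /h leq_divRL //.
have := leq_divM (t - m) q; rewrite mulSn; lia.
Qed.

Lemma ceil_div_lt (R : realFieldType) (len q : nat) : (0 < q)%N ->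
  (((len + q - 1) %/ q)%N%:R < len%:R / q%:R + 1 :> R)%R.
Proof.
move=> q0.
have -> : (len%:R / q%:R + 1 : R)%R = ((len + q)%:R / q%:R)%R.
  by rewrite natrD mulrDl divff // pnatr_eq0 -lt0n.
rewrite ltr_pdivlMr ?ltr0n // -natrM ltr_nat.
have := leq_divM (len + q - 1) q; lia.
Qed.

Definition scaled_nat (k : nat) (b : rat) : nat := `|numq (k%:R * b)%R|%N.

Lemma scaled_natE {k c : nat} {b : rat} :
  (k%:R * b = c%:R :> rat)%R -> scaled_nat k b = c.
Proof. by rewrite /scaled_nat => ->; rewrite (numq_int (Posz c)). Qed.

Lemma propertyP_not_dvd_upper_sum (R : realType) (A : {fset nat}) (alpha : R)
    (n z s : nat) :
  propertyP A -> z \in A -> (z%:R <= alpha * n%:R)%R ->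
  s \in sumset (Apart A alpha 1 n) (Apart A alpha 1 n) -> ~~ (z %| s)%N.
Proof.
move=> hP zA zal /imfset2P [x xX [y yX ->]].
move: xX yX; rewrite !inE /= => /andP [xA /andP [xal _]] /andP [yA /andP [yal _]].
have zx : (z < x)%N by rewrite -(ltr_nat R); exact: le_lt_trans zal xal.
have zy : (z < y)%N by rewrite -(ltr_nat R); exact: le_lt_trans zal yal.
exact: hP.
Qed.

Theorem mainTheorem5 (R : realType) (n : nat) (A : {fset nat})
    (k a q : nat) (alpha : R) (B : {fset rat}) (l : int) (len : nat) :
  (forall x, x \in A -> (1 <= x <= n)%N) ->
  propertyP A ->
  (0 < k)%N -> (0 < a)%N -> (0 < q)%N ->
  (0 <= alpha)%R -> (alpha <= 1)%R ->
  (forall b, b \in B -> exists c : nat,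
      (k%:R * b = c%:R :> rat)%R /\ (0 < c)%N /\
      (exists z : nat, z \in A /\ (1 <= z)%N /\ (z%:R <= alpha * n%:R)%R /\ (z %| c)%N) /\
      c = a %[mod q] /\
      inIntv l len c%:Z) ->
  ((#|` B|%:R + #|` sumsetIntvAP (Apart A alpha 1 n) l len a q|%:R : R) < len%:R / q%:R + 1)%R.
Proof.
move=> _ hP k0 _ q0 _ _ hB.
set S := sumsetIntvAP _ _ _ _ _.
have [m hm] := inIntv_natIntv l len.
pose s := map (scaled_nat k) B ++ S.
have scaled_inj : {in B &, injective (scaled_nat k)}.
  move=> b b' /hB [c [e _]] /hB [c' [e' _]].
  rewrite (scaled_natE e) (scaled_natE e') => ecc'.
  apply: (mulfI (x := (k%:R : rat))); first by rewrite pnatr_eq0 -lt0n.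
  by rewrite e e' ecc'.
have values_uniq : uniq s.
  rewrite cat_uniq fset_uniq andbT map_inj_in_uniq ?fset_uniq //=.
  apply/hasPn => t tS; apply/negP => /mapP [b /hB [c [e [_ [[z [zA [_ [zal zc]]]] _]]]] tb].
  move: tS; rewrite tb (scaled_natE e) !inE /= => /andP [cS _].
  by move: zc; apply/negP; exact: propertyP_not_dvd_upper_sum cS.
have values_in_class : forall t, t \in s -> (m <= t < m + len)%N /\ t %% q = a %% q.
  move=> t; rewrite mem_cat => /orP [/mapP [b /hB [c [e [_ [_ [hc hi]]]]] ->]|].
    by rewrite (scaled_natE e); split => //; exact: hm.
  rewrite !inE /= => /andP [_ /andP [hi /andP [ha hq]]].
  by split; [exact: hm | apply/eqP; rewrite eqn_mod_dvd].
have := residue_class_count q0 values_uniq values_in_class; rewrite size_cat size_map => hsize.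
rewrite -natrD; apply: (le_lt_trans (y := (((len + q - 1) %/ q)%N%:R)%R)); last exact: ceil_div_lt.
by rewrite ler_nat.
Qed.
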